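(* Let $p\ge2$, $m\in\mathbb{N}$, $a,b>0$, $\beta\in\mathbb{R}^p$, and consider the multiple regression function $f(x)=(1,x^T)^T$ for $x\in\mathbb{R}^{p-1}$. Let $x_1,\ldots,x_p\in\mathbb{R}^{p-1}$ be such that $f(x_1),\ldots,f(x_p)$ are linearly independent, let $c\in\mathbb{R}$ with $f(x_j)^T\beta=c$ for $j=1,\ldots,p-1$, and assume $f(x_p)^T\beta>c$. Among all designs $\xi$ supported on $\{x_1,\ldots,x_p\}$ with weights $w_1,\ldots,w_p$, the weights maximizing $\det(M(\xi;\beta))$ are $$w_p^*=\frac{2}{p+\sqrt{(p-2)^2+4(p-1)\dfrac{1+\frac{m}{b}\exp(f(x_p)^T\beta)}{1+\frac{m}{b}\exp(c)}}},\qquad w_1^*=\cdots=w_{p-1}^*=\frac{1-w_p^*}{p-1},$$ and these weights satisfy $0<w_p^*<\frac1p<w_1^*=\cdots=w_{p-1}^*<\frac{1}{p-1}$.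
   Context: A design $\xi$ is a probability measure with finite support $x_1,\ldots,x_l$ and weights $w_1,\ldots,w_l\ge0$, $\sum_j w_j=1$. The Poisson information matrix is $M_{Po}(\xi;\beta)=\sum_{j=1}^l w_j\exp(f(x_j)^T\beta)f(x_j)f(x_j)^T$, and the Poisson–Gamma information matrix is $M(\xi;\beta)=\frac{a}{b}\Bigl(M_{Po}(\xi;\beta)-\frac{M_{Po}(\xi;\beta)e_1e_1^TM_{Po}(\xi;\beta)}{e_1^TM_{Po}(\xi;\beta)e_1+b/m}\Bigr)$, where $e_1$ is the first standard unit vector of $\mathbb{R}^p$. *)

From HB Require Import structures.
From mathcomp Require Import all_boot all_order all_algebra.
From mathcomp Require Import reals sequences exp.
Set Implicit Arguments. Unset Strict Implicit. Unset Printing Implicit Defensive.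
Import Order.TTheory GRing.Theory Num.Theory.
Local Open Scope ring_scope.

(* Throughout, the dimension p of the parameter is written n.+1
   (so x ranges over R^(p-1) = 'cV_n and f(x), beta live in 'cV_(n.+1)). *)
Section Defs.
Variable R : realType.
Variable n : nat.

Definition regf (x : 'cV[R]_n) : 'cV[R]_(n.+1) := col_mx (const_mx 1 : 'cV[R]_1) x.

Definition linpred (x : 'cV[R]_n) (beta : 'cV[R]_(n.+1)) : R :=
  ((regf x)^T *m beta) 0 0.

Definition e1 : 'cV[R]_(n.+1) := delta_mx 0 0.

Definition M_Po (l : nat) (x : 'I_l -> 'cV[R]_n) (w : 'I_l -> R)
  (beta : 'cV[R]_(n.+1)) : 'M[R]_(n.+1) :=
  \sum_(j < l) (w j * expR (linpred (x j) beta)) *: (regf (x j) *m (regf (x j))^T).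

Definition M_PG (a b : R) (m : nat) (l : nat) (x : 'I_l -> 'cV[R]_n)
  (w : 'I_l -> R) (beta : 'cV[R]_(n.+1)) : 'M[R]_(n.+1) :=
  let MP := M_Po x w beta in
  (a / b) *: (MP - ((e1^T *m MP *m e1) 0 0 + b / m%:R)^-1 *:
                     (MP *m e1 *m e1^T *m MP)).

Definition is_design_weights (l : nat) (w : 'I_l -> R) : Prop :=
  (forall j, 0 <= w j) /\ \sum_(j < l) w j = 1.

Definition wp_star (b : R) (m : nat) (c etap : R) : R :=
  let p : R := (n.+1)%:R in
  2 / (p + Num.sqrt ((p - 2) ^+ 2 + 4 * (p - 1) *
        ((1 + m%:R / b * expR etap) / (1 + m%:R / b * expR c)))).

Definition w_star (b : R) (m : nat) (c etap : R) (j : 'I_(n.+1)) : R :=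
  if j == ord_max then wp_star b m c etap
  else (1 - wp_star b m c etap) / n%:R.

End Defs.

(* With F the matrix of rows f(x_j)^T, lambda_j = exp(f(x_j)^T beta) and kappa = b/m,
   the Poisson matrix is F^T diag(w_j lambda_j) F and the Poisson-Gamma matrix is a
   rank-one correction of it along e_1, so for weights summing to one
     det M(xi; beta) = (a/b)^p det(F)^2 (prod_j lambda_j) kappa * prod_j w_j / sum_j mu_j w_j
   with mu_j = lambda_j + kappa.  The claimed weights are the positive stationary point
   w* of prod_j w_j / sum_j mu_j w_j on the simplex, w*_j (p - 1 + mu_j / sum_i mu_i w*_i) = 1;
   since mu_1 = ... = mu_{p-1}, this reduces to a quadratic equation for w*_p.  At w* the
   log-ratio against any other w splits as (p - 1) sum_j w*_j log(w_j/w*_j) plus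
   sum_j v_j log(w_j / (w*_j q)) for the probability vector v_j = mu_j w*_j / sum_i mu_i w*_i
   and a normalizing q; both sums are nonpositive by log y <= y - 1, the first strictly
   unless w = w*. *)

From HB Require Import structures.
From mathcomp Require Import all_boot all_order all_algebra.
From mathcomp Require Import reals sequences exp.
From mathcomp Require Import ring lra.

Set Implicit Arguments.
Unset Strict Implicit.
Unset Printing Implicit Defensive.

Import Order.TTheory GRing.Theory Num.Theory.
Local Open Scope ring_scope.

Section LogInequalities.
Variable R : realType.

Lemma ln_le_subr1 (y : R) : 0 < y -> ln y <= y - 1.
Proof.
by move=> y_gt0; have := @le_ln1Dx R (y - 1); rewrite [1 + _]addrC subrK; apply; lra.
Qed.

Lemma ln_lt_subr1 (y : R) : 0 < y -> y != 1 -> ln y < y - 1.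
Proof.
move=> y_gt0 y_neq1; rewrite -ltr_expR lnK ?posrE //.
have := @expR_gt1Dx R (y - 1); rewrite subr_eq0 => /(_ y_neq1); lra.
Qed.

Lemma ln_prod (I : Type) (r : seq I) (P : pred I) (f : I -> R) :
  (forall i, P i -> 0 < f i) ->
  ln (\prod_(i <- r | P i) f i) = \sum_(i <- r | P i) ln (f i).
Proof.
move=> f_gt0; apply: expR_inj; rewrite expR_sum lnK ?posrE ?prodr_gt0 //.
by apply: eq_bigr => i /f_gt0 fi_gt0; rewrite lnK ?posrE.
Qed.

Lemma sum_mul_ln_le (p : nat) (v y : 'I_p -> R) :
  (forall j, 0 <= v j) -> (forall j, 0 < y j) ->
  \sum_j v j * ln (y j) <= \sum_j v j * y j - \sum_j v j.
Proof.
move=> v_ge0 y_gt0; rewrite -sumrB; apply: ler_sum => j _.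
by rewrite -[X in _ - X]mulr1 -mulrBr ler_wpM2l ?ln_le_subr1.
Qed.

Lemma sum_mul_ln_lt (p : nat) (v y : 'I_p -> R) (j0 : 'I_p) :
  (forall j, 0 <= v j) -> (forall j, 0 < y j) -> 0 < v j0 -> y j0 != 1 ->
  \sum_j v j * ln (y j) < \sum_j v j * y j - \sum_j v j.
Proof.
move=> v_ge0 y_gt0 vj0_gt0 yj0_neq1.
rewrite -sumrB (bigD1 j0) // [X in _ < X](bigD1 j0) //=; apply: ltr_leD.
  by rewrite -[X in _ < _ - X]mulr1 -mulrBr ltr_pM2l ?ln_lt_subr1.
apply: ler_sum => j _.
by rewrite -[X in _ - X]mulr1 -mulrBr ler_wpM2l ?ln_le_subr1.
Qed.

End LogInequalities.

Definition prod_div_dot (R : realType) (p : nat) (mu w : 'I_p -> R) : R :=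
  (\prod_j w j) / \sum_j mu j * w j.

Lemma dot_gt0 (R : realType) (p : nat) (mu w : 'I_p -> R) :
  (forall j, 0 < mu j) -> is_design_weights w -> 0 < \sum_j mu j * w j.
Proof.
move=> mu_gt0 [w_ge0 w_sum1].
have muw_ge0 j : 0 <= mu j * w j := mulr_ge0 (ltW (mu_gt0 j)) (w_ge0 j).
rewrite lt0r sumr_ge0 // andbT; apply/negP => /eqP/(psumr_eq0P (fun j _ => muw_ge0 j)) muw0.
have : \sum_j w j = 0.
  by apply: big1 => j _; have /eqP := muw0 j isT; rewrite mulf_eq0 gt_eqF //= => /eqP.
by rewrite w_sum1; apply/eqP; rewrite oner_eq0.
Qed.

Section SimplexMaximum.
Variables (R : realType) (p : nat) (k : R) (mu ws : 'I_p -> R).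
Hypotheses (k_gt0 : 0 < k) (mu_gt0 : forall j, 0 < mu j)
  (ws_gt0 : forall j, 0 < ws j) (ws_sum1 : \sum_j ws j = 1)
  (ws_stationary : forall j, ws j * (k + mu j / \sum_i mu i * ws i) = 1).

Let Ls := \sum_i mu i * ws i.

Let Ls_gt0 : 0 < Ls.
Proof. by apply: dot_gt0 => //; split=> // j; apply: ltW. Qed.

Lemma ln_prod_div_dotB (w : 'I_p -> R) :
  (forall j, 0 < w j) -> \sum_j w j = 1 ->
  ln (prod_div_dot mu w) - ln (prod_div_dot mu ws) =
  k * \sum_j ws j * ln (w j / ws j) +
  \sum_j mu j * ws j / Ls * ln (w j / ws j / ((\sum_i mu i * w i) / Ls)).
Proof.
move=> w_gt0 w_sum1.
have Lw_gt0 : 0 < \sum_i mu i * w i by apply: dot_gt0 => //; split=> // j; apply: ltW.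
set Lw := \sum_i mu i * w i.
have v_sum1 : \sum_j mu j * ws j / Ls = 1 by rewrite -mulr_suml divff ?gt_eqF.
have v_eq j : mu j * ws j / Ls = 1 - k * ws j.
  by have := ws_stationary j; rewrite -/Ls => <-; ring.
have term j : k * (ws j * ln (w j / ws j)) + mu j * ws j / Ls * ln (w j / ws j / (Lw / Ls))
    = ln (w j) - ln (ws j) - mu j * ws j / Ls * (ln Lw - ln Ls).
  by rewrite !ln_div ?posrE ?divr_gt0 // v_eq; ring.
rewrite /prod_div_dot !ln_div ?posrE ?prodr_gt0 ?divr_gt0 // !ln_prod //.
rewrite -/Ls -/Lw mulr_sumr -big_split /= (eq_bigr _ (fun j _ => term j)).
by rewrite !sumrB -mulr_suml v_sum1; ring.
Qed.

Lemma prod_div_dot_lt (w : 'I_p -> R) (j0 : 'I_p) :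
  is_design_weights w -> w j0 != ws j0 -> prod_div_dot mu w < prod_div_dot mu ws.
Proof.
move=> [w_ge0 w_sum1] wj0_neq.
have [/forallP w_gt0 | /forallPn [j1]] := boolP [forall j, 0 < w j]; last first.
  rewrite -leNgt => wj1_le0; have wj1_eq0 : w j1 = 0 by apply/le_anti; rewrite wj1_le0 w_ge0.
  by rewrite /prod_div_dot (bigD1 j1) //= wj1_eq0 !mul0r divr_gt0 ?prodr_gt0.
have Lw_gt0 : 0 < \sum_i mu i * w i by apply: dot_gt0 => //; split=> // j; apply: ltW.
set Lw := \sum_i mu i * w i in Lw_gt0.
have z_gt0 j : 0 < w j / ws j by rewrite divr_gt0.
have zq_gt0 j : 0 < w j / ws j / (Lw / Ls) by rewrite !divr_gt0.
rewrite -ltr_ln ?posrE ?divr_gt0 ?prodr_gt0 // -subr_lt0 ln_prod_div_dotB // -/Lw.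
have gibbs_ws : \sum_j ws j * ln (w j / ws j) < 0.
  have zj0_neq1 : w j0 / ws j0 != 1.
    apply: contra wj0_neq => /eqP zj0_eq1.
    by rewrite -[w j0](divfK (lt0r_neq0 (ws_gt0 j0))) zj0_eq1 mul1r.
  have := sum_mul_ln_lt (fun j => ltW (ws_gt0 j)) z_gt0 (ws_gt0 j0) zj0_neq1.
  have wsz_eq j : ws j * (w j / ws j) = w j by rewrite mulrC divfK ?lt0r_neq0.
  by rewrite (eq_bigr _ (fun j _ => wsz_eq j)) w_sum1 ws_sum1 subrr.
have gibbs_v : \sum_j mu j * ws j / Ls * ln (w j / ws j / (Lw / Ls)) <= 0.
  have v_ge0 j : 0 <= mu j * ws j / Ls by rewrite ltW ?divr_gt0 ?mulr_gt0.
  have := sum_mul_ln_le v_ge0 zq_gt0.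
  have vzq_eq j : mu j * ws j / Ls * (w j / ws j / (Lw / Ls)) = mu j * w j / Lw.
    by field; rewrite !gt_eqF.
  rewrite (eq_bigr _ (fun j _ => vzq_eq j)) -!mulr_suml !divff ?gt_eqF //.
  by rewrite subrr.
have : k * \sum_j ws j * ln (w j / ws j) < 0 by rewrite pmulr_rlt0.
lra.
Qed.

Lemma prod_div_dot_le (w : 'I_p -> R) :
  is_design_weights w -> prod_div_dot mu w <= prod_div_dot mu ws.
Proof.
move=> w_design.
have [/forallP w_eq | /forallPn [j0 wj0_neq]] := boolP [forall j, w j == ws j].
  by rewrite le_eqVlt /prod_div_dot; apply/orP; left; apply/eqP;
    congr (_ / _); apply: eq_bigr => j _; rewrite (eqP (w_eq j)).
exact/ltW/(prod_div_dot_lt w_design wj0_neq).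
Qed.

Lemma prod_div_dot_max_unique (w : 'I_p -> R) :
  is_design_weights w -> prod_div_dot mu w = prod_div_dot mu ws -> w =1 ws.
Proof.
move=> w_design w_max j; apply/eqP/negPn/negP => /(prod_div_dot_lt w_design).
by rewrite w_max ltxx.
Qed.

End SimplexMaximum.

Section InformationDeterminant.
Variables (R : realType) (n : nat).

Lemma regf00 (x : 'cV[R]_n) : regf x 0 0 = 1.
Proof.
rewrite /regf mxE; case: splitP => [i _|i /= hi]; first by rewrite mxE.
by move: hi; rewrite add1n.
Qed.

Lemma det_rank1_update (A : 'M[R]_n.+1) (s : R) :
  \det (A - s *: (A *m e1 R n *m (e1 R n)^T *m A)) = \det A * (1 - s * A 0 0).
Proof.
set B : 'M[R]_n.+1 := 1%:M - s *: (delta_mx 0 0 *m A).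
have -> : A - s *: (A *m e1 R n *m (e1 R n)^T *m A) = A *m B.
  by rewrite mulmxBr mulmx1 -scalemxAr !mulmxA /e1 trmx_delta -(mulmxA A) mul_delta_mx.
have B_entry i j : B i j = (i == j)%:R - s * ((i == 0)%:R * A 0 j).
  rewrite !mxE (bigD1 0) //= big1 ?addr0 => [|l /negbTE l_neq0]; last first.
    by rewrite mxE l_neq0 andbF mul0r.
  by rewrite mxE eqxx andbT.
rewrite det_mulmx; congr (_ * _); rewrite -det_tr det_trig; last first.
  apply/is_trig_mxP => i j i_lt_j; have j_gt0 : (0 < j)%N := leq_ltn_trans (leq0n i) i_lt_j.
  by rewrite mxE B_entry -!val_eqE /= !gtn_eqF // mul0r mulr0 subr0.
rewrite big_ord_recl big1 => [|i _]; rewrite mxE B_entry eqxx //.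
  by rewrite mul1r mulr1.
by rewrite mul0r mulr0 subr0.
Qed.

Definition regf_mx (l : nat) (x : 'I_l -> 'cV[R]_n) : 'M[R]_(l, n.+1) :=
  \matrix_(j < l) (regf (x j))^T.

Lemma M_Po_factor (l : nat) (x : 'I_l -> 'cV[R]_n) (w : 'I_l -> R) (beta : 'cV[R]_n.+1) :
  M_Po x w beta =
  (regf_mx x)^T *m diag_mx (\row_j (w j * expR (linpred (x j) beta))) *m regf_mx x.
Proof.
apply/matrixP => i k; rewrite /M_Po summxE !mxE; apply: eq_bigr => j _.
by rewrite mul_mx_diag !mxE big_ord1 !mxE mulrA; congr (_ * _); exact: mulrC.
Qed.

Lemma det_M_Po (x : 'I_n.+1 -> 'cV[R]_n) (w : 'I_n.+1 -> R) (beta : 'cV[R]_n.+1) :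
  \det (M_Po x w beta) =
  \det (regf_mx x) ^+ 2 * \prod_j (w j * expR (linpred (x j) beta)).
Proof.
rewrite M_Po_factor !det_mulmx det_tr det_diag.
by under eq_bigr do rewrite mxE; rewrite mulrAC expr2.
Qed.

Lemma M_Po00 (l : nat) (x : 'I_l -> 'cV[R]_n) (w : 'I_l -> R) (beta : 'cV[R]_n.+1) :
  M_Po x w beta 0 0 = \sum_j w j * expR (linpred (x j) beta).
Proof.
rewrite /M_Po summxE; apply: eq_bigr => j _.
by rewrite mxE [(_ *m _) _ _]mxE big_ord1 [(regf _)^T _ _]mxE regf00 !mulr1.
Qed.

End InformationDeterminant.

Lemma det_M_PG_design (R : realType) (n : nat) (a b : R) (m : nat)
    (x : 'I_n.+1 -> 'cV[R]_n) (w : 'I_n.+1 -> R) (beta : 'cV[R]_n.+1) :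
  0 < b -> (0 < m)%N -> is_design_weights w ->
  \det (M_PG a b m x w beta) =
  (a / b) ^+ n.+1 * \det (regf_mx x) ^+ 2 * (\prod_j expR (linpred (x j) beta)) *
  (b / m%:R) * prod_div_dot (fun j => expR (linpred (x j) beta) + b / m%:R) w.
Proof.
move=> b_gt0 m_gt0 w_design; have [_ w_sum1] := w_design.
rewrite /M_PG; set kappa := b / m%:R.
have kappa_gt0 : 0 < kappa by rewrite divr_gt0 ?ltr0n.
have L_gt0 : 0 < \sum_j (expR (linpred (x j) beta) + kappa) * w j.
  by apply: dot_gt0 => // j; rewrite addr_gt0 ?expR_gt0.
have L_eq : \sum_j (expR (linpred (x j) beta) + kappa) * w j =
            \sum_j w j * expR (linpred (x j) beta) + kappa.
  rewrite -[X in _ + X]mulr1 -w_sum1 mulr_sumr -big_split /=.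
  by apply: eq_bigr => j _; ring.
have e1_form (A : 'M[R]_n.+1) : ((e1 R n)^T *m A *m e1 R n) 0 0 = A 0 0.
  by rewrite /e1 trmx_delta -rowE -colE !mxE.
rewrite detZ e1_form det_rank1_update det_M_Po M_Po00 big_split /= /prod_div_dot L_eq.
by field; rewrite -L_eq gt_eqF.
Qed.

Lemma det_M_PG_scale_gt0 (R : realType) (n : nat) (a b : R) (m : nat)
    (x : 'I_n.+1 -> 'cV[R]_n) (beta : 'cV[R]_n.+1) :
  0 < a -> 0 < b -> (0 < m)%N -> row_free (regf_mx x) ->
  0 < (a / b) ^+ n.+1 * \det (regf_mx x) ^+ 2 * (\prod_j expR (linpred (x j) beta)) *
      (b / m%:R).
Proof.
move=> a_gt0 b_gt0 m_gt0 F_free.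
have F_det : \det (regf_mx x) != 0 by rewrite -unitfE -unitmxE -row_free_unit.
apply: mulr_gt0; last by rewrite divr_gt0 ?ltr0n.
apply: mulr_gt0; last by apply: prodr_gt0 => j _; apply: expR_gt0.
by apply: mulr_gt0; [rewrite exprn_gt0 ?divr_gt0 | rewrite exprn_even_gt0].
Qed.

Definition opt_weight (R : rcfType) (N r : R) : R :=
  2 / (N + 1 + Num.sqrt ((N - 1) ^+ 2 + 4 * N * r)).

Lemma discr_ge0 (R : rcfType) (N r : R) :
  0 <= N -> 0 <= r -> 0 <= (N - 1) ^+ 2 + 4 * N * r.
Proof. by move=> N_ge0 r_ge0; rewrite addr_ge0 ?sqr_ge0 // !mulr_ge0. Qed.

Lemma opt_weight_gt0 (R : rcfType) (N r : R) : 0 <= N -> 0 < opt_weight N r.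
Proof.
move=> N_ge0; have := sqrtr_ge0 ((N - 1) ^+ 2 + 4 * N * r).
set s := Num.sqrt _ => s_ge0; have den_gt0 : 0 < N + 1 + s by lra.
exact: divr_gt0.
Qed.

Lemma opt_weight_lt (R : rcfType) (N r : R) :
  0 < N -> 1 < r -> opt_weight N r < 1 / (N + 1).
Proof.
move=> N_gt0 r_gt1; rewrite /opt_weight.
have s_ge0 := sqrtr_ge0 ((N - 1) ^+ 2 + 4 * N * r).
have s_sqr := sqr_sqrtr (discr_ge0 (ltW N_gt0) (ltW (lt_trans ltr01 r_gt1))).
set s := Num.sqrt _ in s_ge0 s_sqr *.
have D_gt : (N + 1) ^+ 2 < (N - 1) ^+ 2 + 4 * N * r.
  by rewrite -subr_gt0 (_ : _ - _ = 4 * (N * (r - 1))) ?mulr_gt0 ?subr_gt0 //; ring.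
have s_gt : N + 1 < s by rewrite -s_sqr in D_gt; nra.
have N1_gt0 : 0 < N + 1 by lra.
have den_gt0 : 0 < N + 1 + s by lra.
by rewrite ltr_pdivrMr // mulrAC ltr_pdivlMr // mul1r; lra.
Qed.

Lemma opt_weight_root (R : rcfType) (N r : R) : 0 <= N -> 0 <= r ->
  N * (r - 1) * opt_weight N r ^+ 2 + (N + 1) * opt_weight N r - 1 = 0.
Proof.
move=> N_ge0 r_ge0; rewrite /opt_weight.
have s_ge0 := sqrtr_ge0 ((N - 1) ^+ 2 + 4 * N * r).
have s_sqr := sqr_sqrtr (discr_ge0 N_ge0 r_ge0).
set s := Num.sqrt _ in s_ge0 s_sqr *.
have den_gt0 : 0 < N + 1 + s by lra.
have -> : N * (r - 1) * (2 / (N + 1 + s)) ^+ 2 + (N + 1) * (2 / (N + 1 + s)) - 1 =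
          (4 * N * (r - 1) + (N + 1) ^+ 2 - s ^+ 2) / (N + 1 + s) ^+ 2.
  by field; rewrite lt0r_neq0.
by rewrite s_sqr (_ : _ - _ = 0) ?mul0r //; ring.
Qed.

Lemma opt_weight_stationary (R : rcfType) (N mu0 nu : R) :
  0 < N -> 0 < mu0 -> mu0 < nu ->
  let t := opt_weight N (nu / mu0) in let L := mu0 * (1 - t) + nu * t in
  (1 - t) / N * (N + mu0 / L) = 1 /\ t * (N + nu / L) = 1.
Proof.
move=> N_gt0 mu0_gt0 mu0_lt_nu t L.
have r_gt1 : 1 < nu / mu0 by rewrite ltr_pdivlMr // mul1r.
have t_gt0 : 0 < t := opt_weight_gt0 _ (ltW N_gt0).
have t_lt1 : t < 1.
  apply: lt_le_trans (opt_weight_lt N_gt0 r_gt1) _.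
  by rewrite ler_pdivrMr ?mul1r; lra.
have L_gt0 : 0 < L.
  by apply: addr_gt0; apply: mulr_gt0; rewrite ?subr_gt0 // (lt_trans mu0_gt0).
have := opt_weight_root (ltW N_gt0) (ltW (lt_trans ltr01 r_gt1)); rewrite -/t => t_root.
split.
  have -> : (1 - t) / N * (N + mu0 / L) =
      1 - mu0 * (N * (nu / mu0 - 1) * t ^+ 2 + (N + 1) * t - 1) / (N * L).
    by rewrite /L; field; rewrite -/L !lt0r_neq0.
  by rewrite t_root mulr0 mul0r subr0.
have -> : t * (N + nu / L) =
    1 + mu0 * (N * (nu / mu0 - 1) * t ^+ 2 + (N + 1) * t - 1) / L.
  by rewrite /L; field; rewrite -/L !lt0r_neq0.
by rewrite t_root mulr0 mul0r addr0.
Qed.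

Lemma compl_weight_bounds (R : realFieldType) (N t : R) :
  0 < N -> 0 < t -> t < 1 / (N + 1) ->
  1 / (N + 1) < (1 - t) / N /\ (1 - t) / N < 1 / N.
Proof.
move=> N_gt0 t_gt0 t_lt; have N1_gt0 : 0 < N + 1 by lra.
rewrite ltr_pdivlMr // in t_lt.
split; rewrite -subr_gt0.
  rewrite (_ : _ - _ = (1 - t * (N + 1)) / (N * (N + 1))); last by field; rewrite !lt0r_neq0.
  by apply: divr_gt0; [rewrite subr_gt0 | exact: mulr_gt0].
rewrite (_ : _ - _ = t / N); last by field; rewrite lt0r_neq0.
exact: divr_gt0.
Qed.

Lemma sumr_ord_max_const (R : pzSemiRingType) (n : nat) (f : 'I_n.+1 -> R) (A : R) :
  (forall j, j != ord_max -> f j = A) -> \sum_j f j = n%:R * A + f ord_max.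
Proof.
move=> f_off; rewrite big_ord_recr /= (eq_bigr (fun _ => A)) => [|i _].
  by rewrite sumr_const card_ord mulr_natl.
by apply: f_off; rewrite -val_eqE /= neq_ltn ltn_ord.
Qed.

Lemma two_level_stationary (R : rcfType) (n : nat) (mu0 nu : R)
    (mu ws : 'I_n.+1 -> R) :
  (0 < n)%N -> 0 < mu0 -> mu0 < nu ->
  (forall j, j != ord_max -> mu j = mu0) -> mu ord_max = nu ->
  (forall j, j != ord_max -> ws j = (1 - opt_weight n%:R (nu / mu0)) / n%:R) ->
  ws ord_max = opt_weight n%:R (nu / mu0) ->
  [/\ forall j, 0 < ws j, \sum_j ws j = 1 &
      forall j, ws j * (n%:R + mu j / \sum_i mu i * ws i) = 1].
Proof.
move=> n_gt0 mu0_gt0 mu0_lt_nu mu_off mu_max ws_off ws_max.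
have N_gt0 : 0 < n%:R :> R by rewrite ltr0n.
have r_gt1 : 1 < nu / mu0 by rewrite ltr_pdivlMr // mul1r.
have [stat_off stat_max] := opt_weight_stationary N_gt0 mu0_gt0 mu0_lt_nu.
have t_gt0 := opt_weight_gt0 (nu / mu0) (ltW N_gt0).
have [compl_gt _] := compl_weight_bounds N_gt0 t_gt0 (opt_weight_lt N_gt0 r_gt1).
move: (opt_weight _ _) t_gt0 ws_off ws_max stat_off stat_max compl_gt.
move=> t t_gt0 ws_off ws_max stat_off stat_max compl_gt.
have L_eq : \sum_i mu i * ws i = mu0 * (1 - t) + nu * t.
  rewrite (@sumr_ord_max_const _ _ _ (mu0 * ((1 - t) / n%:R))) => [|j j_off].
    by rewrite mu_max ws_max; field; rewrite lt0r_neq0.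
  by rewrite mu_off ?ws_off.
split.
- move=> j; case: (eqVneq j ord_max) => [-> | j_off].
    by rewrite ws_max.
  by rewrite ws_off // (lt_trans _ compl_gt) // divr_gt0 //; lra.
- by rewrite (sumr_ord_max_const ws_off) ws_max; field; rewrite lt0r_neq0.
- move=> j; rewrite L_eq; case: (eqVneq j ord_max) => [-> | j_off].
    by rewrite ws_max mu_max.
  by rewrite ws_off ?mu_off.
Qed.

Lemma wp_starE (R : realType) (n : nat) (b : R) (m : nat) (c eta : R) :
  0 < b -> (0 < m)%N ->
  wp_star n b m c eta =
  opt_weight n%:R ((expR eta + b / m%:R) / (expR c + b / m%:R)).
Proof.
move=> b_gt0 m_gt0; have m_gt0' : 0 < m%:R :> R by rewrite ltr0n.
have kappa_gt0 : 0 < b / m%:R by rewrite divr_gt0.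
have ratio_eq : (1 + m%:R / b * expR eta) / (1 + m%:R / b * expR c) =
                (expR eta + b / m%:R) / (expR c + b / m%:R).
  by field; rewrite !lt0r_neq0 ?addr_gt0 ?mulr_gt0 ?divr_gt0 ?expR_gt0.
rewrite /wp_star /opt_weight ratio_eq -natr1.
by congr (2 / (_ + Num.sqrt (_ + _))); ring.
Qed.

Theorem theorem7 (R : realType) (n : nat) (hn : (1 <= n)%N) (m : nat)
  (hm : (0 < m)%N) (a b : R) (ha : 0 < a) (hb : 0 < b)
  (beta : 'cV[R]_(n.+1)) (x : 'I_(n.+1) -> 'cV[R]_n) (c : R)
  (hind : row_free (\matrix_(j < n.+1) (regf (x j))^T))
  (hc : forall j : 'I_(n.+1), j != ord_max -> linpred (x j) beta = c)
  (hp : c < linpred (x ord_max) beta) :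
  let ws := w_star b m c (linpred (x ord_max) beta) in
  let wp := wp_star n b m c (linpred (x ord_max) beta) in
  [/\ is_design_weights ws,
      (forall w : 'I_(n.+1) -> R, is_design_weights w ->
         \det (M_PG a b m x w beta) <= \det (M_PG a b m x ws beta)),
      (forall w : 'I_(n.+1) -> R, is_design_weights w ->
         \det (M_PG a b m x w beta) = \det (M_PG a b m x ws beta) ->
         forall j, w j = ws j),
      0 < wp /\ wp < 1 / (n.+1)%:R &
      (forall j : 'I_(n.+1), j != ord_max ->
         1 / (n.+1)%:R < ws j /\ ws j < 1 / n%:R)].
Proof.
move=> ws wp; have N_gt0 : 0 < n%:R :> R by rewrite ltr0n.
pose mu j := expR (linpred (x j) beta) + b / m%:R.
have mu_gt0 j : 0 < mu j by rewrite addr_gt0 ?expR_gt0 ?divr_gt0 ?ltr0n.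
have mu0_gt0 : 0 < expR c + b / m%:R by rewrite addr_gt0 ?expR_gt0 ?divr_gt0 ?ltr0n.
have mu0_lt_nu : expR c + b / m%:R < mu ord_max by rewrite ltrD2r ltr_expR.
have r_gt1 : 1 < mu ord_max / (expR c + b / m%:R) by rewrite ltr_pdivlMr // mul1r.
have wpE : wp = opt_weight n%:R (mu ord_max / (expR c + b / m%:R)) := wp_starE _ _ _ hb hm.
have [ws_gt0 ws_sum1 ws_stationary] :
    [/\ forall j, 0 < ws j, \sum_j ws j = 1 &
        forall j, ws j * (n%:R + mu j / \sum_i mu i * ws i) = 1].
  apply: (two_level_stationary hn mu0_gt0 mu0_lt_nu) => [j /hc | | j /negbTE | ] //.
  - by rewrite /mu => ->.
  - by rewrite /ws /w_star => ->; rewrite wp_starE.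
  - by rewrite /ws /w_star eqxx wp_starE.
have ws_design : is_design_weights ws := conj (fun j => ltW (ws_gt0 j)) ws_sum1.
have det_eq w := @det_M_PG_design R n a b m x w beta hb hm.
have K_gt0 := det_M_PG_scale_gt0 beta ha hb hm hind.
split=> //.
- move=> w w_design; rewrite !det_eq // ler_pM2l //.
  exact: (prod_div_dot_le _ mu_gt0 ws_gt0 ws_sum1 ws_stationary).
- move=> w w_design; rewrite !det_eq // => /(mulfI (lt0r_neq0 K_gt0)).
  exact: (prod_div_dot_max_unique _ mu_gt0 ws_gt0 ws_sum1 ws_stationary).
- by rewrite wpE -natr1 opt_weight_gt0 ?opt_weight_lt // ltW.
- move=> j j_off; rewrite /ws /w_star (negbTE j_off) -/wp wpE -natr1.
  by apply: compl_weight_bounds; rewrite ?opt_weight_gt0 ?opt_weight_lt // ltW.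
Qed.
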